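(* Let $A\in\mathbb{R}^{n\times n}$ be symmetric positive definite, $b\in\mathbb{R}^n$, and let the $CD$ method (described in the context) be applied to $Ay=b$ with starting point $y_0\in\mathbb{R}^n$ and real parameters $\gamma_k\neq 0$ for all $k\ge 0$. Then any directions $p_0,\dots,p_k$ ($k\ge0$) generated by the method are linearly independent. Moreover, within at most $n$ iterations the method computes the solution of $Ay=b$, i.e. $Ay_h=b$ for some $h\le n$.
   Context: The $CD$ method for solving $Ay=b$, with $A$ symmetric positive definite, starting point $y_0\in\mathbb{R}^n$ and nonzero real parameters $\gamma_0,\gamma_1,\dots$, is the following iteration (all norms Euclidean). Set $r_0=b-Ay_0$; if $r_0=0$ stop; set $p_0=r_0$. For $k=0,1,2,\dots$: compute $a_k=\dfrac{r_k^Tp_k}{p_k^TAp_k}$, $y_{k+1}=y_k+a_kp_k$, $r_{k+1}=r_k-a_kAp_k$; if $r_{k+1}=0$ stop; otherwise set $\sigma_k=\gamma_k\dfrac{\|Ap_k\|^2}{p_k^TAp_k}$ and, if $k=0$, $p_1=\gamma_0Ap_0-\sigma_0p_0$, while if $k\ge1$, $\omega_k=\gamma_k\dfrac{(Ap_k)^T(Ap_{k-1})}{p_{k-1}^TAp_{k-1}}$ and $p_{k+1}=\gamma_kAp_k-\sigma_kp_k-\omega_kp_{k-1}$. *)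

From HB Require Import structures.
From mathcomp Require Import all_boot all_order all_algebra.
Set Implicit Arguments. Unset Strict Implicit. Unset Printing Implicit Defensive.
Import Order.TTheory GRing.Theory Num.Theory.
Local Open Scope ring_scope.

Definition dotv (R : realFieldType) (n : nat) (u v : 'cV[R]_n) : R :=
  (u^T *m v) ord0 ord0.

Definition spd (R : realFieldType) (n : nat) (A : 'M[R]_n) : Prop :=
  A^T = A /\ forall x : 'cV[R]_n, x != 0 -> 0 < dotv x (A *m x).

(* State of the CD iteration at index k: (y_k, r_k, p_k, p_{k-1}).
   (p_{-1} := 0 is a dummy, never used since omega is only used for k >= 1.) *)
Record cd_state (R : realFieldType) (n : nat) := CDState {
  cd_y : 'cV[R]_n; cd_r : 'cV[R]_n; cd_p : 'cV[R]_n; cd_pprev : 'cV[R]_n }.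

Definition cd_step (R : realFieldType) (n : nat) (A : 'M[R]_n)
    (gamma : nat -> R) (k : nat) (s : cd_state R n) : cd_state R n :=
  let y := cd_y s in let r := cd_r s in let p := cd_p s in
  let pm := cd_pprev s in
  let Ap := A *m p in
  let a := dotv r p / dotv p Ap in
  let y' := y + a *: p in
  let r' := r - a *: Ap in
  let sigma := gamma k * dotv Ap Ap / dotv p Ap in
  let p' :=
    if k is 0 then gamma 0 *: Ap - sigma *: p
    else let omega := gamma k * dotv Ap (A *m pm) / dotv pm (A *m pm) in
         gamma k *: Ap - sigma *: p - omega *: pm in
  CDState y' r' p' p.

Definition cd_init (R : realFieldType) (n : nat) (A : 'M[R]_n)
    (b y0 : 'cV[R]_n) : cd_state R n :=
  let r0 := b - A *m y0 in CDState y0 r0 r0 0.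

(* State at index k (the quantities are only meaningful as long as the
   method has not stopped, i.e. r_0, ..., r_{k-1} are nonzero). *)
Fixpoint cd_iter (R : realFieldType) (n : nat) (A : 'M[R]_n)
    (b y0 : 'cV[R]_n) (gamma : nat -> R) (k : nat) : cd_state R n :=
  if k is k'.+1 then cd_step A gamma k' (cd_iter A b y0 gamma k')
  else cd_init A b y0.

Definition cd_y_ R n A b y0 gamma k := cd_y (@cd_iter R n A b y0 gamma k).
Definition cd_r_ R n A b y0 gamma k := cd_r (@cd_iter R n A b y0 gamma k).
Definition cd_p_ R n A b y0 gamma k := cd_p (@cd_iter R n A b y0 gamma k).

From HB Require Import structures.
From mathcomp Require Import all_boot all_order all_algebra.
Set Implicit Arguments.
Unset Strict Implicit.
Unset Printing Implicit Defensive.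
Import Order.TTheory GRing.Theory Num.Theory.
Local Open Scope ring_scope.

(* The directions are pairwise A-conjugate: for j <= k - 2 the term
   (A p_k)^T A p_j vanishes because A p_j lies in the span of p_0, ..., p_(j+1),
   and the coefficients sigma_k, omega_k are exactly those killing the two
   remaining inner products.  The residual r_k lies in the span of
   p_0, ..., p_k and, by the choice of the step a_k, is orthogonal to
   p_0, ..., p_(k-1); hence p_k = 0 would force r_k = 0.  Nonzero A-conjugate
   vectors are linearly independent, so at most n directions can be generated
   before a residual r_h = b - A y_h vanishes. *)

Lemma mem_mkseqP (T : eqType) (f : nat -> T) m x :
  reflect (exists2 i, (i < m)%N & x = f i) (x \in mkseq f m).
Proof.
apply: (iffP mapP) => [[i]|[i im ->]]; last by exists i; rewrite ?mem_iota.
by rewrite mem_iota => /andP[_ im] ->; exists i.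
Qed.

Section InnerProduct.
Variables (R : realFieldType) (n : nat).
Implicit Types (u v w x : 'cV[R]_n) (X : seq 'cV[R]_n).

Lemma dotvE u v : dotv u v = \sum_i u i ord0 * v i ord0.
Proof. by rewrite /dotv mxE; apply: eq_bigr => i _; rewrite mxE. Qed.

Lemma dotvC u v : dotv u v = dotv v u.
Proof. by rewrite !dotvE; apply: eq_bigr => i _; rewrite mulrC. Qed.

Lemma dotv0r u : dotv u 0 = 0.
Proof. by rewrite /dotv mulmx0 mxE. Qed.

Lemma dotvDr u v w : dotv u (v + w) = dotv u v + dotv u w.
Proof. by rewrite /dotv mulmxDr mxE. Qed.

Lemma dotvZr u a v : dotv u (a *: v) = a * dotv u v.
Proof. by rewrite /dotv -scalemxAr mxE. Qed.

Lemma dotvBr u v w : dotv u (v - w) = dotv u v - dotv u w.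
Proof. by rewrite dotvDr -scaleN1r dotvZr mulN1r. Qed.

Lemma dotvZl u a v : dotv (a *: v) u = a * dotv v u.
Proof. by rewrite !(dotvC _ u) dotvZr. Qed.

Lemma dotvBl u v w : dotv (v - w) u = dotv v u - dotv w u.
Proof. by rewrite !(dotvC _ u) dotvBr. Qed.

Lemma dotv_sumr u m (F : 'I_m -> 'cV[R]_n) :
  dotv u (\sum_i F i) = \sum_i dotv u (F i).
Proof.
elim/big_ind2: _ => [|x1 x2 y1 y2 <- <-|//]; first by rewrite dotv0r.
by rewrite dotvDr.
Qed.

Lemma dotv_eq0 u : (dotv u u == 0) = (u == 0).
Proof.
apply/idP/eqP => [|->]; last by rewrite dotv0r.
rewrite dotvE => /eqP/psumr_eq0P u0; apply/matrixP => i j.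
have /eqP := u0 (fun i _ => sqr_ge0 (u i ord0)) i isT.
by rewrite (ord1 j) !mxE mulf_eq0 orbb => /eqP.
Qed.

Lemma dotv_span_eq0 u X x :
  x \in <<X>>%VS -> {in X, forall y, dotv u y = 0} -> dotv u x = 0.
Proof.
move=> /(@coord_span _ _ _ (in_tuple X)) -> uX.
rewrite dotv_sumr big1 // => i _.
by rewrite dotvZr uX ?mulr0 // mem_nth.
Qed.

Lemma orth_span_eq0 X x :
  x \in <<X>>%VS -> {in X, forall y, dotv x y = 0} -> x = 0.
Proof. by move=> xX /(dotv_span_eq0 xX) /eqP; rewrite dotv_eq0 => /eqP. Qed.

Lemma free_size X : free X -> (size X <= n)%N.
Proof.
move=> /eqP <-; have := dimvS (subvf <<X>>%VS).
by rewrite dimvf dim_matrix mulr1.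
Qed.

End InnerProduct.

Section Conjugacy.
Variables (R : realFieldType) (n : nat) (A : 'M[R]_n).
Hypothesis spdA : spd A.

Lemma spd_sym : A^T = A. Proof. by case: spdA. Qed.

Lemma dotv_mulmxl u v : dotv (A *m u) v = dotv u (A *m v).
Proof. by rewrite /dotv trmx_mul spd_sym mulmxA. Qed.

Lemma dotv_mulmxC u v : dotv u (A *m v) = dotv v (A *m u).
Proof. by rewrite -dotv_mulmxl dotvC. Qed.

Lemma spd_dotv_neq0 u : u != 0 -> dotv u (A *m u) != 0.
Proof. by case: spdA => _ posA /posA /lt0r_neq0. Qed.

Lemma conjugate_free (X : seq 'cV[R]_n) :
  (forall x, x \in X -> x != 0) ->
  (forall i j, (j < i < size X)%N -> dotv X`_i (A *m X`_j) = 0) ->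
  free X.
Proof.
move=> X_neq0 X_conj; suff: free (in_tuple X) by [].
apply/freeP => c c0 i.
have conj_ij j : j != i -> dotv X`_i (A *m X`_j) = 0.
  case: (ltngtP i j) => [ij|ji|/val_inj ->]; last by rewrite eqxx.
    by rewrite dotv_mulmxC X_conj ?ij ?ltn_ord.
  by rewrite X_conj ?ji ?ltn_ord.
have := congr1 (fun x => dotv X`_i (A *m x)) c0.
rewrite mulmx0 dotv0r mulmx_sumr dotv_sumr (bigD1 i) //= big1 ?addr0.
  rewrite -scalemxAr dotvZr => /eqP; rewrite mulf_eq0 => /orP[/eqP //|].
  by rewrite (negbTE (spd_dotv_neq0 (X_neq0 _ (mem_nth 0 (ltn_ord i))))).
by move=> j ji; rewrite -scalemxAr dotvZr conj_ij ?mulr0.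
Qed.

Section CD.
Variables (b y0 : 'cV[R]_n) (gamma : nat -> R).
Hypothesis gamma_neq0 : forall k, gamma k != 0.

Local Notation y := (cd_y_ A b y0 gamma).
Local Notation r := (cd_r_ A b y0 gamma).
Local Notation p := (cd_p_ A b y0 gamma).
Local Notation Adot u v := (dotv u (A *m v)).
Local Notation sigma k :=
  (gamma k * dotv (A *m p k) (A *m p k) / Adot (p k) (p k)).
Local Notation omega k :=
  (gamma k * dotv (A *m p k) (A *m p k.-1) / Adot (p k.-1) (p k.-1)).
Local Notation conjugate_upto k :=
  (forall i j, (j < i <= k)%N -> Adot (p i) (p j) = 0).

Lemma cd_rS k : r k.+1 = r k - (dotv (r k) (p k) / Adot (p k) (p k)) *: (A *m p k).
Proof. by []. Qed.

Lemma cd_yS k : y k.+1 = y k + (dotv (r k) (p k) / Adot (p k) (p k)) *: p k.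
Proof. by []. Qed.

Lemma cd_p1 : p 1 = gamma 0 *: (A *m p 0) - sigma 0 *: p 0.
Proof. by []. Qed.

Lemma cd_pSS k : p k.+2 = gamma k.+1 *: (A *m p k.+1)
   - sigma k.+1 *: p k.+1
   - omega k.+1 *: p k.
Proof. by []. Qed.

Lemma cd_residualE k : r k = b - A *m y k.
Proof.
elim: k => [//|k IHk].
by rewrite cd_rS cd_yS IHk mulmxDr opprD addrA -scalemxAr.
Qed.

Lemma cd_p_in_span j m : (j < m)%N -> p j \in <<mkseq p m>>%VS.
Proof. by move=> jm; apply/memv_span/mem_mkseqP; exists j. Qed.

Lemma cd_span_mono m m' : (m <= m')%N -> (<<mkseq p m>> <= <<mkseq p m'>>)%VS.
Proof.
move=> mm'; apply: sub_span => _ /mem_mkseqP[i im ->].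
by apply/mem_mkseqP; exists i; rewrite ?(leq_trans im).
Qed.

Lemma cd_Ap_decomp k :
  exists s w, gamma k *: (A *m p k) = p k.+1 + w *: p k.-1 + s *: p k.
Proof.
case: k => [|k]; first by exists (sigma 0), 0; rewrite scale0r addr0 cd_p1 subrK.
by exists (sigma k.+1), (omega k.+1); rewrite cd_pSS !subrK.
Qed.

Lemma cd_Ap_in_span k : A *m p k \in <<mkseq p k.+2>>%VS.
Proof.
have [s [w Ap]] := cd_Ap_decomp k.
rewrite -(scalerK (gamma_neq0 k) (A *m p k)) Ap; apply: memvZ.
by rewrite !memvD ?memvZ ?cd_p_in_span // !ltnS (leq_trans (leq_pred k)).
Qed.

Lemma cd_r_in_span k : r k \in <<mkseq p k.+1>>%VS.
Proof.
elim: k => [|k IHk]; first exact: memv_span (mem_head _ _).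
rewrite cd_rS memvB ?memvZ ?cd_Ap_in_span //.
exact: subvP (cd_span_mono (leqnSn _)) _ IHk.
Qed.

Lemma cd_pS_conjugate k :
  (forall j, (j <= k)%N -> p j != 0) -> conjugate_upto k ->
  forall j, (j <= k)%N -> Adot (p k.+1) (p j) = 0.
Proof.
move=> p_neq0 p_conj j jk.
have Adot_neq0 i : (i <= k)%N -> Adot (p i) (p i) != 0.
  by move/p_neq0; apply: spd_dotv_neq0.
case: k => [|k] in p_neq0 p_conj jk Adot_neq0 *.
  move: jk; rewrite leqn0 => /eqP ->.
  by rewrite cd_p1 dotvBl !dotvZl divfK ?subrr ?Adot_neq0.
rewrite cd_pSS !dotvBl !dotvZl.
have [->|jk1] := eqVneq j k.+1.
  rewrite (dotv_mulmxC (p k)) (p_conj k.+1 k) ?leqnn // mulr0 subr0.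
  by rewrite divfK ?subrr ?Adot_neq0.
have {jk1}jk : (j <= k)%N by rewrite -ltnS ltn_neqAle jk1.
rewrite (p_conj k.+1 j) ?mulr0 ?subr0 ?ltnS ?jk ?leqnn //.
have [->|jk1] := eqVneq j k; first by rewrite divfK ?subrr ?Adot_neq0.
have {jk1}jk : (j < k)%N by rewrite ltn_neqAle jk1.
rewrite (p_conj k j) ?mulr0 ?subr0 ?jk ?leqnSn //.
suff -> : dotv (A *m p k.+1) (A *m p j) = 0 by rewrite mulr0.
apply: dotv_span_eq0 (cd_Ap_in_span j) _ => _ /mem_mkseqP[i ij ->].
rewrite dotv_mulmxl p_conj //.
by rewrite leqnn andbT ltnS (leq_trans _ jk).
Qed.

Lemma cd_rS_orth k :
  Adot (p k) (p k) != 0 -> conjugate_upto k ->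
  (forall j, (j < k)%N -> dotv (r k) (p j) = 0) ->
  forall j, (j <= k)%N -> dotv (r k.+1) (p j) = 0.
Proof.
move=> pk_neq0 p_conj r_orth j; rewrite leq_eqVlt => /orP[/eqP ->|jk].
  by rewrite cd_rS dotvBl dotvZl dotv_mulmxl divfK ?subrr.
by rewrite cd_rS dotvBl dotvZl dotv_mulmxl r_orth ?(p_conj k j) ?jk ?leqnn ?mulr0 ?subr0.
Qed.

Lemma cd_invariant k : (forall j, (j <= k)%N -> r j != 0) ->
  [/\ forall j, (j <= k)%N -> p j != 0,
      conjugate_upto k &
      forall j, (j < k)%N -> dotv (r k) (p j) = 0].
Proof.
elim: k => [|k IHk] r_neq0.
  split=> [j|i j|//]; last by rewrite leqn0 => /andP[ji /eqP i0]; rewrite i0 in ji.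
  by rewrite leqn0 => /eqP ->; exact: (r_neq0 0 (leqnn 0)).
have [p_neq0 p_conj r_orth] := IHk (fun j jk => r_neq0 j (leqW jk)).
have rS_orth := cd_rS_orth (spd_dotv_neq0 (p_neq0 k (leqnn k))) p_conj r_orth.
have pS_conj := cd_pS_conjugate p_neq0 p_conj.
split=> [j|i j|]; last exact: rS_orth.
- rewrite leq_eqVlt ltnS => /orP[/eqP ->|]; last exact: p_neq0.
  apply: contraNneq (r_neq0 k.+1 (leqnn _)) => pS0.
  apply/eqP/(orth_span_eq0 (cd_r_in_span k.+1)) => x /mem_mkseqP[i].
  rewrite ltnS leq_eqVlt => /orP[/eqP ->|ik] ->; first by rewrite pS0 dotv0r.
  exact: rS_orth.
- case/andP=> ji; rewrite leq_eqVlt => /orP[/eqP ik|ik].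
    by rewrite ik pS_conj // -ltnS -ik.
  by apply: p_conj; rewrite ji -ltnS.
Qed.

Lemma cd_directions_free k : (forall j, (j <= k)%N -> r j != 0) ->
  free (mkseq p k.+1).
Proof.
move=> /cd_invariant[p_neq0 p_conj _].
apply: conjugate_free => [_ /mem_mkseqP[j jk ->]|i j]; first exact: p_neq0.
rewrite size_mkseq ltnS => /andP[ji ik].
have jk : (j <= k)%N by exact: ltnW (leq_trans ji ik).
by rewrite !nth_mkseq ?ltnS // p_conj // ji.
Qed.

Lemma cd_residual_vanishes : exists2 h, (h <= n)%N & r h == 0.
Proof.
suff /existsP[h rh0] : [exists h : 'I_n.+1, r h == 0].
  by exists h; first exact: (ltn_ord h).
apply/contraT => /existsPn r_neq0.
have := free_size (cd_directions_free (fun j (jn : (j < n.+1)%N) => r_neq0 (Ordinal jn))).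
by rewrite size_mkseq ltnn.
Qed.

End CD.

End Conjugacy.

Theorem lemma3 (R : realFieldType) (n : nat) (A : 'M[R]_n) (b y0 : 'cV[R]_n)
    (gamma : nat -> R) :
  spd A -> (forall k, gamma k != 0) ->
  (forall k : nat,
     (forall j : nat, (j <= k)%N -> cd_r_ A b y0 gamma j != 0) ->
     free (mkseq (cd_p_ A b y0 gamma) k.+1)) /\
  (exists h : nat, [/\ (h <= n)%N,
     (forall j : nat, (j < h)%N -> cd_r_ A b y0 gamma j != 0) &
     A *m cd_y_ A b y0 gamma h = b]).
Proof.
move=> spdA gamma_neq0; split; first exact: cd_directions_free.
have [m mn rm0] := cd_residual_vanishes spdA b y0 gamma_neq0.
have [h rh0 h_min] := ex_minnP (ex_intro (fun h => cd_r_ A b y0 gamma h == 0) m rm0).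
exists h; split.
- exact: leq_trans (h_min _ rm0) mn.
- by move=> j jh; apply: contraTN jh => /h_min; rewrite leqNgt.
- by apply/eqP; rewrite eq_sym -subr_eq0 -cd_residualE.
Qed.
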